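(* Let $\mathcal T$ be a triangulated category, $X\in\mathcal T$ and $n\ge0$ such that $\operatorname{thick}^{n+1}(X)=\mathcal T$. Put $Y=X\oplus\Sigma^nX$. Then $\hom^p(Y)\subseteq\operatorname{thick}^p(Y)$ for all $p\ge0$. Consequently, if moreover every object of $\mathcal T$ is homologically finite, then $Y$ is a finitistic generator of $\mathcal T$.
   Context: $\Sigma$ denotes the suspension. With $\operatorname{add}\mathcal X$ the smallest full subcategory containing $\mathcal X$ closed under finite direct sums and direct summands, set $\operatorname{thick}^0(X)=\operatorname{add}\varnothing$, $\operatorname{thick}^1(X)=\operatorname{add}\{\Sigma^iX\mid i\in\mathbb Z\}$, and for $n>1$, $\operatorname{thick}^n(X)=\operatorname{add}\{\operatorname{cone}\varphi\mid\varphi\colon U\to V,\ U\in\operatorname{thick}^1(X),\ V\in\operatorname{thick}^{n-1}(X)\}$. For objects $X,Y$ and $n\ge0$, write $h(X,Y)\le n$ if for all $i,j\in\mathbb Z$: $\operatorname{Hom}(X,\Sigma^iY)\ne0\ne\operatorname{Hom}(X,\Sigma^jY)$ implies $|i-j|<n$; $\hom^n(X):=\{Z\mid h(X,Z)\le n\}$. $X$ is homologically finite if for every $Z$ there is $n$ with $h(X,Z)\le n$. $X$ is a finitistic generator if $X$ is homologically finite and $\hom^p(X)\subseteq\operatorname{thick}^p(X)$ for all $p\ge0$. *)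

From HB Require Import structures.
From mathcomp Require Import all_boot all_order all_algebra.
Set Implicit Arguments. Unset Strict Implicit. Unset Printing Implicit Defensive.
Import Order.TTheory GRing.Theory Num.Theory.
Local Open Scope ring_scope.

Record AddCat := {
  Ob :> Type;
  Hom : Ob -> Ob -> zmodType;
  comp : forall X Y Z : Ob, Hom Y Z -> Hom X Y -> Hom X Z;
  idm : forall X : Ob, Hom X X;
  comp_assoc : forall (W X Y Z : Ob) (h : Hom Y Z) (g : Hom X Y) (f : Hom W X),
      comp h (comp g f) = comp (comp h g) f;
  comp_idl : forall (X Y : Ob) (f : Hom X Y), comp (idm Y) f = f;
  comp_idr : forall (X Y : Ob) (f : Hom X Y), comp f (idm X) = f;
  comp_addl : forall (X Y Z : Ob) (g1 g2 : Hom Y Z) (f : Hom X Y),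
      comp (g1 + g2) f = comp g1 f + comp g2 f;
  comp_addr : forall (X Y Z : Ob) (g : Hom Y Z) (f1 f2 : Hom X Y),
      comp g (f1 + f2) = comp g f1 + comp g f2;
  zero_ob : Ob;
  zero_obP : idm zero_ob = 0;
  biprod_exists : forall A B : Ob, exists D : Ob,
      exists (i1 : Hom A D) (p1 : Hom D A) (i2 : Hom B D) (p2 : Hom D B),
      [/\ comp p1 i1 = idm A, comp p2 i2 = idm B, comp p2 i1 = 0,
          comp p1 i2 = 0 & comp i1 p1 + comp i2 p2 = idm D]
}.
Arguments comp {a X Y Z}.
Arguments idm {a}.
Arguments zero_ob {a}.

Section AddDefs.
Variable C : AddCat.

Definition is_iso (X Y : C) (f : Hom X Y) : Prop :=
  exists g : Hom Y X, comp g f = idm X /\ comp f g = idm Y.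

Definition is_biproduct (A B D : C) : Prop :=
  exists (i1 : Hom A D) (p1 : Hom D A) (i2 : Hom B D) (p2 : Hom D B),
    [/\ comp p1 i1 = idm A, comp p2 i2 = idm B, comp p2 i1 = 0,
        comp p1 i2 = 0 & comp i1 p1 + comp i2 p2 = idm D].

Definition is_zero_ob (Z : C) : Prop := idm Z = 0.

(* add S : smallest full subcategory containing S, closed under finite direct
   sums (the empty sum being a zero object) and direct summands. *)
Inductive addC (S : C -> Prop) : C -> Prop :=
| addC_base X : S X -> addC S X
| addC_zero Z : is_zero_ob Z -> addC S Z
| addC_sum A B D : addC S A -> addC S B -> is_biproduct A B D -> addC S D
| addC_summand A B D : addC S D -> is_biproduct A B D -> addC S A.
End AddDefs.

Record Triang (C : AddCat) := {
  Sig : C -> C;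
  Sigm : forall X Y : C, Hom X Y -> Hom (Sig X) (Sig Y);
  Sigm_id : forall X : C, Sigm (idm X) = idm (Sig X);
  Sigm_comp : forall (X Y Z : C) (g : Hom Y Z) (f : Hom X Y),
      Sigm (comp g f) = comp (Sigm g) (Sigm f);
  Sigm_add : forall (X Y : C) (f g : Hom X Y), Sigm (f + g) = Sigm f + Sigm g;
  Sigm_bij : forall X Y : C, bijective (@Sigm X Y);
  Siginv : C -> C;
  Siginv_iso : forall Y : C, exists f : Hom (Sig (Siginv Y)) Y, is_iso f;
  dist : forall X Y Z : C, Hom X Y -> Hom Y Z -> Hom Z (Sig X) -> Prop;
  dist_iso : forall (X Y Z X' Y' Z' : C)
      (f : Hom X Y) (g : Hom Y Z) (h : Hom Z (Sig X))
      (f' : Hom X' Y') (g' : Hom Y' Z') (h' : Hom Z' (Sig X'))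
      (a : Hom X X') (b : Hom Y Y') (c : Hom Z Z'),
      dist f g h -> is_iso a -> is_iso b -> is_iso c ->
      comp b f = comp f' a -> comp c g = comp g' b ->
      comp (Sigm a) h = comp h' c -> dist f' g' h';
  dist_id : forall X : C,
      dist (idm X) (0 : Hom X zero_ob) (0 : Hom zero_ob (Sig X));
  dist_ext : forall (X Y : C) (f : Hom X Y),
      exists (Z : C) (g : Hom Y Z) (h : Hom Z (Sig X)), dist f g h;
  dist_rot : forall (X Y Z : C) (f : Hom X Y) (g : Hom Y Z) (h : Hom Z (Sig X)),
      dist f g h <-> dist g h (- Sigm f);
  dist_morph : forall (X Y Z X' Y' Z' : C)
      (f : Hom X Y) (g : Hom Y Z) (h : Hom Z (Sig X))
      (f' : Hom X' Y') (g' : Hom Y' Z') (h' : Hom Z' (Sig X'))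
      (a : Hom X X') (b : Hom Y Y'),
      dist f g h -> dist f' g' h' -> comp b f = comp f' a ->
      exists c : Hom Z Z', comp c g = comp g' b /\ comp (Sigm a) h = comp h' c;
  dist_oct : forall (X Y Z Z' X' Y' : C) (f : Hom X Y) (g : Hom Y Z)
      (f1 : Hom Y Z') (f2 : Hom Z' (Sig X))
      (g1 : Hom Z X') (g2 : Hom X' (Sig Y))
      (h1 : Hom Z Y') (h2 : Hom Y' (Sig X)),
      dist f f1 f2 -> dist g g1 g2 -> dist (comp g f) h1 h2 ->
      exists (u : Hom Z' Y') (v : Hom Y' X'),
        [/\ comp u f1 = comp h1 g, comp h2 u = f2, comp v h1 = g1,
            comp g2 v = comp (Sigm f) h2 & dist u v (comp (Sigm f1) g2)]
}.

Arguments Sig {C} t _ : rename.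
Arguments Sigm {C} t {X Y} _ : rename.
Arguments Siginv {C} t _ : rename.
Arguments dist {C} t {X Y Z} _ _ _ : rename.

Section TriDefs.
Variables (C : AddCat) (T : Triang C).

Definition Sigz (i : int) (X : C) : C :=
  match i with
  | Posz n => iter n (Sig T) X
  | Negz n => iter n.+1 (Siginv T) X
  end.

Definition susp_class (X : C) : C -> Prop := fun Z => exists i : int, Z = Sigz i X.

Definition thick1 (X : C) : C -> Prop := addC (susp_class X).

Definition cone_class (X : C) (P : C -> Prop) : C -> Prop := fun W =>
  exists (U V : C) (phi : Hom U V) (g : Hom V W) (h : Hom W (Sig T U)),
    thick1 X U /\ P V /\ dist T phi g h.

Fixpoint thick (n : nat) (X : C) {struct n} : C -> Prop :=
  match n with
  | 0 => addC (fun _ : C => False)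
  | m.+1 => match m with
            | 0 => thick1 X
            | _ => addC (cone_class X (thick m X))
            end
  end.

Definition nonzero_hom (X Y : C) : Prop := exists f : Hom X Y, f != 0.

Definition h_le (X Y : C) (n : nat) : Prop :=
  forall i j : int, nonzero_hom X (Sigz i Y) -> nonzero_hom X (Sigz j Y) ->
    (`|i - j| < n)%N.

Definition hom_class (n : nat) (X : C) : C -> Prop := fun Z => h_le X Z n.

Definition homologically_finite (X : C) : Prop :=
  forall Z : C, exists n : nat, h_le X Z n.

Definition finitistic_generator (X : C) : Prop :=
  homologically_finite X /\
  forall (p : nat) (Z : C), hom_class p X Z -> thick p X Z.
End TriDefs.

From Pilot Require Import Defs.
From mathcomp Require Import all_boot all_order all_algebra.
Set Implicit Arguments. Unset Strict Implicit. Unset Printing Implicit Defensive.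
Import Order.TTheory GRing.Theory Num.Theory.
Local Open Scope ring_scope.

(* Large p (p > n): X is a summand of Y, so thick^{n+1}(X) is contained in
   thick^{n+1}(Y), and the levels thick^m(Y) increase with m (every object
   is the cone of 0 -> it); hence every object lies in thick^p(Y).

   Small p (p <= n): let Z be in hom^p(Y).  A nonzero map X -> Sigma^i Z
   gives, after n suspensions, a nonzero map Sigma^n X -> Sigma^{i+n} Z; both
   factor nontrivially through Y, so h(Y,Z) >= n+1 > p, impossible.  Hence X
   lies in the left orthogonal {W | Hom(W, Sigma^i Z) = 0 for all i}.  This
   class is closed under suspensions, desuspensions, direct sums, summands
   and cones, so it contains thick^{n+1}(X), i.e. every object, and in
   particular Z itself: Z is a zero object, which lies in every thick^p(Y). *)

Section Triangulated.
Variables (C : AddCat) (T : Triang C).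
Local Notation Hom := (@Defs.Hom C).
Local Notation comp := (@Defs.comp C _ _ _).

Lemma comp0l (X Y Z : C) (f : Hom X Y) : comp (0 : Hom Y Z) f = 0.
Proof. by apply: (addrI (comp (0 : Hom Y Z) f)); rewrite -comp_addl !addr0. Qed.

Lemma comp0r (X Y Z : C) (g : Hom Y Z) : comp g (0 : Hom X Y) = 0.
Proof. by apply: (addrI (comp g (0 : Hom X Y))); rewrite -comp_addr !addr0. Qed.

Lemma compNl (X Y Z : C) (g : Hom Y Z) (f : Hom X Y) : comp (- g) f = - comp g f.
Proof. by apply: (addIr (comp g f)); rewrite -comp_addl !addNr comp0l. Qed.

Lemma compNr (X Y Z : C) (g : Hom Y Z) (f : Hom X Y) : comp g (- f) = - comp g f.
Proof. by apply: (addIr (comp g f)); rewrite -comp_addr !addNr comp0r. Qed.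

Lemma iso_id (A : C) : is_iso (idm A).
Proof. by exists (idm A); rewrite comp_idl. Qed.

Lemma Sigm0 (X Y : C) : Sigm T (0 : Hom X Y) = 0.
Proof. by apply: (addrI (Sigm T (0 : Hom X Y))); rewrite -Sigm_add !addr0. Qed.

Lemma Sigm_inj (X Y : C) : injective (@Sigm C T X Y).
Proof. exact: bij_inj (Sigm_bij T X Y). Qed.

Lemma Sigm_surj (X Y : C) (g : Hom (Sig T X) (Sig T Y)) :
  exists f : Hom X Y, Sigm T f = g.
Proof. by case: (Sigm_bij T X Y) => h _ hK; exists (h g); rewrite hK. Qed.

Lemma Sigm_eq0 (X Y : C) (f : Hom X Y) : Sigm T f = 0 -> f = 0.
Proof. by rewrite -(Sigm0 X Y) => /Sigm_inj. Qed.

Lemma Sigz_succ_iso (Z : C) (i : int) :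
  exists e : Hom (Sig T (Sigz T i Z)) (Sigz T (i + 1) Z), is_iso e.
Proof.
case: i => [m|[|k]].
- have -> : Posz m + 1 = Posz m.+1 by rewrite -addn1.
  exact: ex_intro _ _ (iso_id _).
- exact: Siginv_iso.
- have -> : Negz k.+1 + 1 = Negz k by rewrite !NegzE -addn1 PoszD opprD addrNK.
  exact: Siginv_iso.
Qed.

Definition orth (A B : C) : Prop := forall f : Hom A B, f = 0.

Lemma orth_iso (A A' B B' : C) (a : Hom A' A) (b : Hom B' B) :
  is_iso a -> is_iso b -> orth A B -> orth A' B'.
Proof.
move=> [a' [Ha1 _]] [b' [Hb1 _]] HAB f.
have -> : f = comp b' (comp (comp b (comp f a')) a).
  by rewrite !comp_assoc Hb1 comp_idl -comp_assoc Ha1 comp_idr.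
by rewrite (HAB (comp b (comp f a'))) comp0l comp0r.
Qed.

Lemma orth_zero (A B : C) : is_zero_ob A -> orth A B.
Proof. by move=> HA f; rewrite -(comp_idr f) HA comp0r. Qed.

Lemma orth_biprod (A B D M : C) :
  is_biproduct A B D -> orth A M -> orth B M -> orth D M.
Proof.
move=> [i1 [p1 [i2 [p2 [_ _ _ _ Hs]]]]] HA HB f.
rewrite -(comp_idr f) -Hs comp_addr !comp_assoc.
by rewrite (HA (comp f i1)) (HB (comp f i2)) !comp0l addr0.
Qed.

(* If p \o i = id_A then A is a retract of D, and f : A -> M is recovered
   from f \o p : D -> M as (f \o p) \o i. *)
Lemma orth_retract (A D M : C) (i : Hom A D) (p : Hom D A) :
  comp p i = idm A -> orth D M -> orth A M.
Proof. by move=> Hpi HD f; rewrite -(comp_idr f) -Hpi comp_assoc (HD (comp f p)) comp0l. Qed.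

Lemma nonzero_hom_retract (A D M : C) (i : Hom A D) (p : Hom D A) :
  comp p i = idm A -> nonzero_hom A M -> nonzero_hom D M.
Proof.
move=> Hpi [f /eqP Hf]; exists (comp f p); apply/eqP => Hfp; apply: Hf.
by rewrite -(comp_idr f) -Hpi comp_assoc Hfp comp0l.
Qed.

(* Sigma is faithful, so suspending a nonzero map X -> Sigma^i Z n times
   gives a nonzero map Sigma^n X -> Sigma^{i+n} Z. *)
Lemma nonzero_hom_Sig (A Z : C) (k : int) :
  nonzero_hom A (Sigz T k Z) -> nonzero_hom (Sig T A) (Sigz T (k + 1) Z).
Proof.
move=> [g /eqP Hg].
have [e [e' [He1 _]]] := Sigz_succ_iso Z k.
exists (comp e (Sigm T g)); apply/eqP => H0; apply: Hg; apply: Sigm_eq0.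
by rewrite -(comp_idl (Sigm T g)) -He1 -comp_assoc H0 comp0r.
Qed.

Lemma nonzero_hom_shift (X Z : C) (i : int) (n : nat) :
  nonzero_hom X (Sigz T i Z) -> nonzero_hom (Sigz T n X) (Sigz T (i + n) Z).
Proof.
move=> Hf; elim: n => [|n IH]; first by rewrite addr0.
have -> : i + Posz n.+1 = i + n + 1 by rewrite -addn1 PoszD addrA.
exact: nonzero_hom_Sig.
Qed.

(* Since Sigma is fully faithful, this class
   is stable under Sigma, Sigma^{-1} and hence every Sigma^j. *)
Definition lperp (Z W : C) : Prop := forall i : int, orth W (Sigz T i Z).

Lemma lperp_Sig (Z W : C) : lperp Z W -> lperp Z (Sig T W).
Proof.
move=> HW i.
have [e [e' [He1 He2]]] := Sigz_succ_iso Z (i - 1); rewrite subrK in e e' He1 He2 *.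
have He' : is_iso e' by exists e.
apply: (orth_iso (iso_id _) He') => f.
by have [g <-] := Sigm_surj f; rewrite (HW _ g) Sigm0.
Qed.

Lemma lperp_Siginv (Z W : C) : lperp Z W -> lperp Z (Siginv T W).
Proof.
move=> HW i f; apply: Sigm_eq0.
have [e He] := Sigz_succ_iso Z i.
have [s Hs] := Siginv_iso T W.
exact: (orth_iso Hs He (HW (i + 1))).
Qed.

Lemma lperp_Sigz (Z W : C) (j : int) : lperp Z W -> lperp Z (Sigz T j W).
Proof.
move=> HW; case: j => m /=.
- by elim: m => [|m IH] //=; apply: lperp_Sig.
- by elim: m => [|m IH] /=; apply: lperp_Siginv.
Qed.

(* The triangle 0 -> N -> N -> Sigma 0 (with -id) is distinguished: rotate
   the identity triangle on Sigma^{-1} N twice and use Sigma Sigma^{-1} N ~ N. *)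
Lemma dist_zero (N : C) :
  dist T (0 : Hom zero_ob N) (- idm N) (0 : Hom N (Sig T zero_ob)).
Proof.
have [e [e' [He1 He2]]] := Siginv_iso T N.
have He : is_iso e by exists e'.
move: (dist_id T (Siginv T N)) => /dist_rot/dist_rot.
rewrite Sigm_id Sigm0 oppr0 => Hd.
apply: (dist_iso Hd (iso_id zero_ob) He He).
- by rewrite comp0l comp0r.
- by rewrite compNl compNr comp_idl comp_idr.
- by rewrite !comp0l comp0r.
Qed.

Lemma dist_factor (U V W N : C) (phi : Hom U V) (g : Hom V W)
    (h : Hom W (Sig T U)) (f : Hom W N) :
  dist T phi g h -> comp f g = 0 -> exists f' : Hom (Sig T U) N, f = comp f' h.
Proof.
move=> /dist_rot Hd Hfg.
have Hsq : comp f g = comp (0 : Hom zero_ob N) (0 : Hom V zero_ob) by rewrite comp0l.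
have [c [Hc _]] := dist_morph Hd (dist_zero N) Hsq.
by exists (- c); rewrite compNl Hc compNl comp_idl opprK.
Qed.

(* The left orthogonal is closed under cones, by the long exact sequence
   (only its part given by dist_factor is needed). *)
Lemma lperp_cone (Z U V W : C) (phi : Hom U V) (g : Hom V W) (h : Hom W (Sig T U)) :
  dist T phi g h -> lperp Z U -> lperp Z V -> lperp Z W.
Proof.
move=> Hd HU HV i f.
have [f' ->] := dist_factor Hd (HV i (comp f g)).
by rewrite (lperp_Sig HU f') comp0l.
Qed.

Lemma lperp_addC (Z : C) (S : C -> Prop) (W : C) :
  (forall W, S W -> lperp Z W) -> Defs.addC S W -> lperp Z W.
Proof.
move=> HS; elim=> {W} [W /HS //|W HW i|A B D _ HA _ HB Hb i|A B D _ HD Hb i].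
- exact: orth_zero.
- exact: orth_biprod Hb (HA i) (HB i).
- by case: Hb => [i1 [p1 [_ [_ [H1 _ _ _ _]]]]]; apply: orth_retract H1 (HD i).
Qed.

Lemma lperp_thick (Z X W : C) (m : nat) :
  lperp Z X -> thick T m.+1 X W -> lperp Z W.
Proof.
move=> HX.
have H1 W' : thick1 T X W' -> lperp Z W'.
  by apply: lperp_addC => W0 [j ->]; apply: lperp_Sigz.
elim: m W => [|m IH] W; first exact: H1.
move=> /= HW; apply: (lperp_addC _ HW) => W0 [U [V [phi [g [h [HU [HV Hd]]]]]]].
exact: lperp_cone Hd (H1 _ HU) (IH _ HV).
Qed.

Lemma lperp_self_zero (Z : C) : lperp Z Z -> is_zero_ob Z.
Proof. by move=> HZ; apply: (HZ 0 (idm Z)). Qed.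

(* Biproduct diagrams can be transported along isomorphisms of all three
   objects; this is how Sigma^{-1}, which only acts on objects, is handled. *)
Lemma biprod_iso (A B D A' B' D' : C) (a : Hom A' A) (b : Hom B' B) (d : Hom D' D) :
  is_iso a -> is_iso b -> is_iso d -> is_biproduct A B D -> is_biproduct A' B' D'.
Proof.
move=> [a' [Ha1 Ha2]] [b' [Hb1 Hb2]] [d' [Hd1 Hd2]].
move=> [i1 [p1 [i2 [p2 [H1 H2 H3 H4 H5]]]]].
exists (comp d' (comp i1 a)), (comp a' (comp p1 d)),
       (comp d' (comp i2 b)), (comp b' (comp p2 d)).
split.
- by rewrite !comp_assoc -(comp_assoc (comp a' p1)) Hd2 comp_idr
             -(comp_assoc a') H1 comp_idr Ha1.
- by rewrite !comp_assoc -(comp_assoc (comp b' p2)) Hd2 comp_idr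
             -(comp_assoc b') H2 comp_idr Hb1.
- by rewrite !comp_assoc -(comp_assoc (comp b' p2)) Hd2 comp_idr
             -(comp_assoc b') H3 comp0r comp0l.
- by rewrite !comp_assoc -(comp_assoc (comp a' p1)) Hd2 comp_idr
             -(comp_assoc a') H4 comp0r comp0l.
- rewrite !comp_assoc -(comp_assoc (comp d' i1)) -(comp_assoc (comp d' i2)).
  by rewrite Ha2 Hb2 !comp_idr -comp_addl -!comp_assoc -comp_addr H5 comp_idr.
Qed.

Lemma biprod_Sig (A B D : C) :
  is_biproduct A B D -> is_biproduct (Sig T A) (Sig T B) (Sig T D).
Proof.
move=> [i1 [p1 [i2 [p2 [H1 H2 H3 H4 H5]]]]].
exists (Sigm T i1), (Sigm T p1), (Sigm T i2), (Sigm T p2).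
by split; rewrite -!Sigm_comp ?H1 ?H2 ?H3 ?H4 ?Sigm0 ?Sigm_id // -Sigm_add H5 Sigm_id.
Qed.

(* Conversely, since Sigma is fully faithful, it reflects biproducts. *)
Lemma biprod_unSig (A B D : C) :
  is_biproduct (Sig T A) (Sig T B) (Sig T D) -> is_biproduct A B D.
Proof.
move=> [i1 [p1 [i2 [p2 [H1 H2 H3 H4 H5]]]]].
have [j1 Ej1] := Sigm_surj i1; have [q1 Eq1] := Sigm_surj p1.
have [j2 Ej2] := Sigm_surj i2; have [q2 Eq2] := Sigm_surj p2.
subst; exists j1, q1, j2, q2.
by split; apply: Sigm_inj; rewrite ?Sigm_add !Sigm_comp ?Sigm_id ?Sigm0.
Qed.

(* Sigma^{-1} preserves biproducts: Sigma (Sigma^{-1} A) ~ A, then reflect. *)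
Lemma biprod_Siginv (A B D : C) :
  is_biproduct A B D -> is_biproduct (Siginv T A) (Siginv T B) (Siginv T D).
Proof.
move=> HD; apply: biprod_unSig.
have [a Ha] := Siginv_iso T A; have [b Hb] := Siginv_iso T B.
have [d Hd] := Siginv_iso T D.
exact: biprod_iso Ha Hb Hd HD.
Qed.

Lemma biprod_Sigz (A B D : C) (j : int) :
  is_biproduct A B D -> is_biproduct (Sigz T j A) (Sigz T j B) (Sigz T j D).
Proof.
move=> HD; case: j => m /=.
- by elim: m => [|m IH] //=; apply: biprod_Sig.
- by elim: m => [|m IH] /=; apply: biprod_Siginv.
Qed.

Lemma addC_sub (S S' : C -> Prop) (W : C) :
  (forall W, S W -> Defs.addC S' W) -> Defs.addC S W -> Defs.addC S' W.
Proof.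
move=> HS; elim=> {W} [W /HS //|W HW|A B D _ HA _ HB Hb|A B D _ HD Hb].
- exact: addC_zero.
- exact: addC_sum HA HB Hb.
- exact: addC_summand HD Hb.
Qed.

Lemma thick_summand (X X' Y W : C) (m : nat) :
  is_biproduct X X' Y -> thick T m.+1 X W -> thick T m.+1 Y W.
Proof.
move=> Hb.
have H1 W' : thick1 T X W' -> thick1 T Y W'.
  apply: addC_sub => W0 [j ->].
  apply: addC_summand (biprod_Sigz j Hb).
  by apply: addC_base; exists j.
elim: m W => [|m IH] W; first exact: H1.
move=> /= HW; apply: (addC_sub _ HW) => W0 [U [V [phi [g [h [HU [HV Hd]]]]]]].
by apply: addC_base; exists U, V, phi, g, h; split; [apply: H1 | split; [apply: IH|]].
Qed.

(* thick^{m+1}(Y) is contained in thick^{m+2}(Y): W is the cone of 0 -> W. *)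
Lemma thick_succ (Y W : C) (m : nat) : thick T m.+1 Y W -> thick T m.+2 Y W.
Proof.
move=> HW; apply: addC_base.
exists zero_ob, W, 0, (- idm W), 0; split; last by split; [|apply: dist_zero].
exact/addC_zero/zero_obP.
Qed.

Lemma thick_le (Y W : C) (m p : nat) :
  (m < p)%N -> thick T m.+1 Y W -> thick T p Y W.
Proof.
move=> Hmp; rewrite -(subnKC Hmp).
elim: (p - m.+1)%N => [|k IH]; first by rewrite addn0.
by move=> HW; rewrite addnS; apply/thick_succ/IH.
Qed.

Lemma thick_zero (Y Z : C) (p : nat) : is_zero_ob Z -> thick T p Y Z.
Proof. by case: p => [|[|p]] HZ /=; apply: addC_zero. Qed.

Lemma hom_class_lperp (X Y Z : C) (n p : nat) :
  is_biproduct X (Sigz T n X) Y -> (p <= n)%N -> hom_class T p Y Z -> lperp Z X.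
Proof.
move=> [i1 [p1 [i2 [p2 [H1 H2 _ _ _]]]]] Hpn Hh i f.
case: (eqVneq f 0) => // Hf; exfalso.
have Hnz : nonzero_hom X (Sigz T i Z) by exists f.
have := Hh _ _ (nonzero_hom_retract H1 Hnz)
               (nonzero_hom_retract H2 (nonzero_hom_shift n Hnz)).
rewrite opprD addrA subrr add0r abszN absz_nat => /leq_trans/(_ Hpn).
by rewrite ltnn.
Qed.
End Triangulated.

Local Close Scope ring_scope.
Unset Implicit Arguments.

Theorem mainTheorem4 (C : AddCat) (T : Triang C) (X : C) (n : nat) :
  (forall Z : C, thick T n.+1 X Z) ->
  forall Y : C, is_biproduct X (Sigz T (Posz n) X) Y ->
  (forall (p : nat) (Z : C), hom_class T p Y Z -> thick T p Y Z) /\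
  ((forall Z : C, homologically_finite T Z) -> finitistic_generator T Y).
Proof.
move=> Hall Y Hb.
have Hgen (p : nat) (Z : C) : hom_class T p Y Z -> thick T p Y Z.
  case: (leqP p n) => Hpn HZ.
  - (* Z is left orthogonal to itself, hence zero. *)
    apply/thick_zero/lperp_self_zero.
    exact: lperp_thick (hom_class_lperp Hb Hpn HZ) (Hall Z).
  - exact: thick_le Hpn (thick_summand Hb (Hall Z)).
by split=> // Hfin; split=> //; apply: Hfin.
Qed.
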